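(* The poset $(\mathcal{D},\le)$ is a lattice.
   Context: A Dyck path of length $2m$ ($m\ge0$) is a lattice path from $(0,0)$ to $(2m,0)$ with steps $\nearrow=(1,1)$, $\searrow=(1,-1)$ never going below the $x$-axis; write $P(x)$ for its height at abscissa $x$. A cell is a point $(a,b)\in\mathbb{Z}^2$ with $b\ge0$, $a+b$ even (viewed as the tilted square with vertices $(a,b),(a+1,b\pm1),(a+2,b)$). The Dyck shape of $P$ (length $2m$) is $S(P)=\{(a,b): b\ge0,\ a+b\text{ even},\ 0\le a\le 2m-2,\ b+1\le P(a+1)\}$. Cells are adjacent if they differ by $(\pm1,\pm1)$. A ribbon is a nonempty set of cells, connected for adjacency, containing no four cells $(a,b),(a+1,b+1),(a+1,b-1),(a+2,b)$. For Dyck paths $D$ of length $2m$ and $E$ of length $2m+2$, $D\sqsubset E$ means $S(D)\subseteq S(E)$ and $S(E)\setminus S(D)$ is a ribbon. $(\mathcal{D},\le)$ is the set of all Dyck paths of all lengths (including the empty path) with $\le$ the reflexive and transitive closure of $\sqsubset$. *)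

From mathcomp Require Import all_boot all_order all_algebra.
From Stdlib Require Import Relation_Operators.
Set Implicit Arguments. Unset Strict Implicit. Unset Printing Implicit Defensive.
Import Order.TTheory GRing.Theory Num.Theory.
Local Open Scope ring_scope.

(* A lattice path is a sequence of steps: true = up (1,1), false = down (1,-1). *)
Definition step_val (s : bool) : int := if s then 1 else -1.

Definition height (P : seq bool) (x : nat) : int :=
  \sum_(i < x) step_val (nth false P i).

Definition is_dyck (P : seq bool) : Prop :=
  (forall x : nat, (x <= size P)%N -> 0 <= height P x) /\ height P (size P) = 0.

Definition cell := (int * int)%type.

Definition in_shape (P : seq bool) (c : cell) : Prop :=
  let: (a, b) := c in
  [/\ 0 <= b, (2 %| a + b)%Z, 0 <= a, a <= (size P)%:Z - 2
    & b + 1 <= height P (absz a).+1].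

Definition adjacent (c d : cell) : Prop :=
  (`|c.1 - d.1| = 1) /\ (`|c.2 - d.2| = 1).

Definition ribbon (R : cell -> Prop) : Prop :=
  [/\ (forall c, R c -> 0 <= c.2 /\ (2 %| c.1 + c.2)%Z),
      (exists c, R c),
      (forall c d, R c -> R d ->
         clos_refl_trans cell (fun x y => [/\ R x, R y & adjacent x y]) c d)
    & (forall a b, ~ [/\ R (a, b), R (a + 1, b + 1), R (a + 1, b - 1)
                        & R (a + 2, b)])].

Definition dcover (D E : seq bool) : Prop :=
  [/\ is_dyck D, is_dyck E, size E = (size D).+2,
      (forall c, in_shape D c -> in_shape E c)
    & ribbon (fun c => in_shape E c /\ ~ in_shape D c)].

Definition dle (D E : seq bool) : Prop := clos_refl_trans (seq bool) dcover D E.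

From mathcomp Require Import all_boot all_order all_algebra zify.
From Stdlib Require Import Relation_Operators.
Set Implicit Arguments. Unset Strict Implicit. Unset Printing Implicit Defensive.
Import Order.TTheory GRing.Theory Num.Theory.
Local Open Scope ring_scope.

(* The order is inclusion of up steps. A cover D ⊏ E never turns an up step of
   D into a down step: E exceeds D by 0 or 2 in height (a gap of 4 would put a
   2x2 block into the ribbon), and once E is strictly above D it stays so (the
   ribbon reaches the right end, hence meets every later column). Conversely,
   turning a down step of D into an up step and appending two down steps adds
   the ribbon of cells just above D from that column on. So D <= E iff the up
   steps of D are up steps of E; the join has the union of the up steps, and
   the meet is the greatest Dyck path, built greedily from the left, whose up
   steps lie in the intersection. *)

Definition up_subset (P Q : seq bool) : Prop :=
  forall i, nth false P i -> nth false Q i.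

Lemma height0 P : height P 0 = 0.
Proof. by rewrite /height big_ord0. Qed.

Lemma heightS P x : height P x.+1 = height P x + step_val (nth false P x).
Proof. by rewrite /height big_ord_recr. Qed.

Definition count_up (P : seq bool) (x : nat) : nat :=
  \sum_(i < x) (nth false P i : nat).

Lemma height_count_up P x : height P x = (2 * count_up P x)%:Z - x%:Z.
Proof.
elim: x => [|x IH]; first by rewrite height0 /count_up big_ord0.
rewrite heightS IH /count_up big_ord_recr /= -/(count_up P x).
by case: (nth false P x) => /=; lia.
Qed.

Lemma height_step P x :
  height P x.+1 = height P x + 1 \/ height P x.+1 = height P x - 1.
Proof. by rewrite heightS /step_val; case: (nth false P x); [left|right]. Qed.

Lemma height_up P x : nth false P x -> height P x.+1 = height P x + 1.
Proof. by rewrite heightS /step_val => ->. Qed.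

Lemma height_down P x : ~~ nth false P x -> height P x.+1 = height P x - 1.
Proof. by rewrite heightS /step_val => /negbTE ->. Qed.

Lemma height_le_index P x : height P x <= x%:Z.
Proof.
elim: x => [|x IH]; first by rewrite height0.
by have := height_step P x; lia.
Qed.

Lemma height_beyond P x : (size P <= x)%N ->
  height P x = height P (size P) - (x - size P)%:Z.
Proof.
elim: x => [|x IH] Px.
  by move: Px; rewrite leqn0 => /eqP ->; rewrite subr0.
case: (ltnP (size P) x.+1) => Px1.
  rewrite height_down ?nth_default ?IH //; lia.
have -> : size P = x.+1 by lia.
by rewrite subnn subr0.
Qed.

Lemma height_le_up_subset P Q x :
    (forall i, (i < x)%N -> nth false P i -> nth false Q i) ->
  height P x <= height Q x.
Proof.
move=> PQ; apply: ler_sum => i _; rewrite /step_val.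
have := PQ i (ltn_ord i).
by case: (nth false P i); case: (nth false Q i) => // /(_ isT).
Qed.

Lemma up_lt_size (P : seq bool) i : nth false P i -> (i < size P)%N.
Proof. by case: (ltnP i (size P)) => // Pi; rewrite nth_default. Qed.

Lemma dyck_ge0 P x : is_dyck P -> (x <= size P)%N -> 0 <= height P x.
Proof. by case=> ge0 _ /ge0. Qed.

Lemma dyck_end P : is_dyck P -> height P (size P) = 0.
Proof. by case. Qed.

Lemma dyck_beyond P x : is_dyck P -> (size P <= x)%N ->
  height P x = - (x - size P)%:Z.
Proof. by move=> dP Px; rewrite height_beyond // dyck_end // sub0r. Qed.

Lemma dyck_nil : is_dyck [::].
Proof.
split; last by rewrite height0.
by move=> x; rewrite leqn0 => /eqP ->; rewrite height0.
Qed.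

(* Beyond [size D] the path [D] is below the axis, yet it dominates [L]. *)
Lemma up_before_size D L p : is_dyck D -> is_dyck L -> nth false L p ->
  (forall i, (i < p)%N -> nth false L i -> nth false D i) -> (p <= size D)%N.
Proof.
move=> dD dL Lp LD; rewrite leqNgt; apply/negP => Dp.
have := height_le_up_subset LD.
have := dyck_beyond dD (ltnW Dp).
have := dyck_ge0 dL (ltnW (up_lt_size Lp)).
lia.
Qed.

Lemma dyck_up_inj P Q : is_dyck P -> is_dyck Q ->
  (forall i, nth false P i = nth false Q i) -> P = Q.
Proof.
move=> dP dQ PQ.
have hPQ x : height P x = height Q x by apply: eq_bigr => i _; rewrite PQ.
have size_le (A B : seq bool) : is_dyck A -> is_dyck B ->
    (forall x, height A x = height B x) -> (size A <= size B)%N.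
  move=> dA dB hAB; rewrite leqNgt; apply/negP => BA.
  have := dyck_beyond dB (leqnSn (size B)).
  by have := dyck_ge0 dA BA; rewrite hAB; lia.
apply: (eq_from_nth (x0 := false)) => [|i _]; last exact: PQ.
by apply/eqP; rewrite eqn_leq !size_le.
Qed.

Lemma in_shape_nat P (n : nat) b : in_shape P (n%:Z, b) <->
  [/\ 0 <= b, (2 %| n%:Z + b)%Z, (n.+2 <= size P)%N & b + 1 <= height P n.+1].
Proof. by split=> [[? ? ? ? /= ?]|[? ? ? ?]]; split=> //=; lia. Qed.

Lemma in_shape_column P a b : in_shape P (a, b) -> exists n : nat, a = n%:Z.
Proof. by case=> _ _ a0 _ _; exists (absz a); rewrite gez0_abs. Qed.

Lemma not_in_shape_above P (n : nat) b :
  height P n.+1 < b + 1 -> ~ in_shape P (n%:Z, b).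
Proof. by move=> Pn /in_shape_nat [_ _ _]; lia. Qed.

Lemma not_in_shape_right P (n : nat) b :
  (size P < n.+2)%N -> ~ in_shape P (n%:Z, b).
Proof. by move=> Pn /in_shape_nat [_ _]; lia. Qed.

Definition adj_in (R : cell -> Prop) (c d : cell) : Prop :=
  [/\ R c, R d & adjacent c d].

Lemma adjacent_sym c d : adjacent c d -> adjacent d c.
Proof. by case=> h1 h2; split; rewrite distrC. Qed.

Lemma connected_columns (R : cell -> Prop) c d :
    clos_refl_trans cell (adj_in R) c d ->
  c = d \/ [/\ R c, R d & forall a, (c.1 <= a <= d.1) \/ (d.1 <= a <= c.1) ->
                                   exists b, R (a, b)].
Proof.
elim=> [[x1 x2] [y1 y2] [Rx Ry [/= dist1 _]]|x|x y z _ IH1 _ IH2].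
- right; split=> // a /= xay.
  have [->|->] : a = x1 \/ a = y1.
    by case: (ger0P (x1 - y1)) dist1; lia.
  + by exists x2.
  + by exists y2.
- by left.
- case: IH1 => [->|[Rx Ry xy]] //.
  case: IH2 => [<-|[_ Rz yz]]; first by right.
  right; split=> // a xaz.
  have [/xy|/yz] // : ((x.1 <= a <= y.1) \/ (y.1 <= a <= x.1)) \/
                     ((y.1 <= a <= z.1) \/ (z.1 <= a <= y.1)) by lia.
Qed.

Lemma chain_connected (R : cell -> Prop) (f : nat -> cell) lo hi :
    (forall n, (lo <= n <= hi)%N -> R (f n)) ->
    (forall n, (lo <= n < hi)%N -> adjacent (f n) (f n.+1)) ->
  forall m n, (lo <= m <= hi)%N -> (lo <= n <= hi)%N ->
    clos_refl_trans cell (adj_in R) (f m) (f n).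
Proof.
move=> Rf adjf.
have walk k m : (lo <= m)%N -> (m + k <= hi)%N ->
    clos_refl_trans cell (adj_in R) (f m) (f (m + k)%N) /\
    clos_refl_trans cell (adj_in R) (f (m + k)%N) (f m).
  elim: k m => [|k IH] m lom mkhi; first by rewrite addn0; split; apply: rt_refl.
  have [IH1 IH2] := IH m.+1 (leqW lom) (ltac:(lia)).
  have Rm : R (f m) by apply: Rf; lia.
  have Rm1 : R (f m.+1) by apply: Rf; lia.
  have fm : adjacent (f m) (f m.+1) by apply: adjf; lia.
  rewrite -addSnnS; split.
  - by apply: rt_trans IH1; apply: rt_step.
  - by apply: rt_trans IH2 _; apply: rt_step; split=> //; apply: adjacent_sym.
move=> m n hm hn; case: (leqP m n) => mn.
  by have := (walk (n - m)%N m (ltac:(lia)) (ltac:(lia))).1; rewrite subnKC.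
by have := (walk (m - n)%N n (ltac:(lia)) (ltac:(lia))).2; rewrite subnKC //; lia.
Qed.

Section Cover.

Variables D E : seq bool.
Hypothesis DE : dcover D E.

Let dD : is_dyck D := let: And5 d _ _ _ _ := DE in d.
Let dE : is_dyck E := let: And5 _ d _ _ _ := DE in d.
Let sizeE : size E = (size D).+2 := let: And5 _ _ s _ _ := DE in s.
Let shapeDE : forall c, in_shape D c -> in_shape E c :=
  let: And5 _ _ _ s _ := DE in s.
Let ribbonDE : ribbon (fun c => in_shape E c /\ ~ in_shape D c) :=
  let: And5 _ _ _ _ r := DE in r.

Lemma cover_height_le x : (x <= size D)%N -> height D x <= height E x.
Proof.
move=> xD; have := dyck_ge0 dE (x := x) (ltac:(lia)).
case: x xD => [|y] yD hE; first by rewrite !height0.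
case: (lerP (height D y.+1) 0) => hD; first lia.
have yD' : (y.+1 < size D)%N.
  rewrite ltn_neqAle yD andbT; apply/eqP => e.
  by move: hD; rewrite e dyck_end.
have parity := height_count_up D y.+1.
have /shapeDE /in_shape_nat [_ _ _] : in_shape D (y%:Z, height D y.+1 - 1).
  by apply/in_shape_nat; split; lia.
lia.
Qed.

(* Otherwise the four cells around (x - 1, height D x + 2) would all lie in the
   ribbon. *)
Lemma cover_height_le_add2 x : (x <= size D)%N -> height E x <= height D x + 2.
Proof.
move=> xD; rewrite leNgt; apply/negP => DEx.
have [_ _ _ no_diamond] := ribbonDE.
have := height_count_up D x; have := height_count_up E x.
have := height_le_index E x; have := dyck_ge0 dD xD.
case: x xD DEx => [|[|y]] yD DEy p1 p2 p3 p4; try lia.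
have := height_step D y.+1; have := height_step D y.+2.
have := height_step E y.+1; have := height_step E y.+2 => q1 q2 q3 q4.
set d := height D y.+2.
have e1 : y%:Z + 1 = (y.+1)%:Z by lia.
have e2 : y%:Z + 2 = (y.+2)%:Z by lia.
apply: (no_diamond (y%:Z) (d + 2)); rewrite e1 e2.
by split; split; first [apply/in_shape_nat; split; lia
                       | apply: not_in_shape_above; lia].
Qed.

(* The ribbon joins the cell just above D in column x - 1 to the cell (size D, 0),
   so it also has a cell in column x. *)
Lemma cover_height_lt_succ x : (0 < x < size D)%N ->
  height D x < height E x -> height D x.+1 < height E x.+1.
Proof.
case: x => [|y] // /andP [_ yD] DEy.
have [_ _ connected _] := ribbonDE.
have := height_count_up D y.+1; have := height_count_up E y.+1 => p1 p2.
have cy : in_shape E (y%:Z, height D y.+1 + 1) /\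
          ~ in_shape D (y%:Z, height D y.+1 + 1).
  split; last by apply: not_in_shape_above; lia.
  have := dyck_ge0 dD (ltnW yD).
  by move=> ?; apply/in_shape_nat; split; lia.
have cend : in_shape E ((size D)%:Z, 0) /\ ~ in_shape D ((size D)%:Z, 0).
  split; last by apply: not_in_shape_right.
  have := height_count_up D (size D); rewrite (dyck_end dD).
  have := height_step E (size D).+1; rewrite -sizeE (dyck_end dE).
  have := dyck_ge0 dE (x := (size D).+1) (ltac:(lia)).
  by move=> *; apply/in_shape_nat; split; lia.
have [e|[_ _ column]] := connected_columns (connected _ _ cy cend).
  by case: e => e; lia.
have [b [/in_shape_nat [b0 parity _ Eb] Db]] :=
  column (y.+1)%:Z (ltac:(rewrite /=; lia)).
rewrite ltNge; apply/negP => ED.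
case: (ltnP y.+2 (size D)) => yD'.
  by apply: Db; apply/in_shape_nat; split; lia.
have e : y.+2 = size D by lia.
by move: ED Eb; rewrite e dyck_end //; lia.
Qed.

Lemma cover_up_subset : up_subset D E.
Proof.
move=> i Di; apply/negP => /negP Ei.
have iD := up_lt_size Di.
have := height_up Di; have := height_down Ei.
have := cover_height_le (ltnW iD); have := cover_height_le iD.
have := cover_height_le_add2 (ltnW iD).
have := height_count_up D i; have := height_count_up E i.
case: (ltrP (height D i) (height E i)) => DEi; last lia.
case: i Di Ei iD DEi => [|i] _ _ iD DEi; first by move: DEi; rewrite !height0.
have := cover_height_lt_succ (x := i.+1) iD DEi; lia.
Qed.

End Cover.

Definition raise (D : seq bool) (p : nat) : seq bool :=
  mkseq (fun i => nth false D i || (i == p)) (size D).+2.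

Lemma size_raise D p : size (raise D p) = (size D).+2.
Proof. exact: size_mkseq. Qed.

Section Raise.

Variables (D : seq bool) (p : nat).
Hypotheses (dD : is_dyck D) (pD : (p <= size D)%N) (Dp : ~~ nth false D p).

Lemma nth_raise i : nth false (raise D p) i = nth false D i || (i == p).
Proof.
case: (ltnP i (size D).+2) => iD; first by rewrite nth_mkseq.
rewrite !nth_default ?size_raise //; last lia.
by apply/esym/eqP; lia.
Qed.

Lemma height_raise x :
  height (raise D p) x = height D x + (if (p < x)%N then 2 else 0).
Proof.
elim: x => [|x IH]; first by rewrite !height0.
rewrite !heightS IH nth_raise.
case: (ltngtP x p) => xp.
- by rewrite orbF (_ : (p < x.+1)%N = false); lia.
- by rewrite orbF (_ : (p < x.+1)%N = true); lia.
- by rewrite xp ltnSn orbT (negbTE Dp) /step_val; lia.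
Qed.

Lemma dyck_raise : is_dyck (raise D p).
Proof.
split; rewrite size_raise.
- move=> x xD; rewrite height_raise.
  case: (leqP x (size D)) => x_le.
    by have := dyck_ge0 dD x_le; case: ifP => ?; lia.
  by rewrite dyck_beyond //; [case: ifP => ?; lia | lia].
- by rewrite height_raise dyck_beyond //; [case: ifP => ?; lia | lia].
Qed.

Lemma raise_shape_sub c : in_shape D c -> in_shape (raise D p) c.
Proof.
case: c => a b Dab; have [n en] := in_shape_column Dab; subst a.
move: Dab => /in_shape_nat [b0 parity nD Db].
apply/in_shape_nat; rewrite size_raise height_raise.
by split; try case: ifP => ?; lia.
Qed.

Lemma raise_new_cellP a b :
  in_shape (raise D p) (a, b) /\ ~ in_shape D (a, b) <->
  exists n : nat, [/\ (p <= n <= size D)%N, a = n%:Z & b = height D n.+1 + 1].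
Proof.
split.
  case=> Eab Dab; have [n en] := in_shape_column Eab; subst a.
  move: Eab => /in_shape_nat [b0 bpar]; rewrite size_raise height_raise => nE Eb.
  have Db : height D n.+1 < b + 1.
    case: (ltnP n.+1 (size D)) => nD.
      by rewrite ltNge; apply/negP => bD; apply: Dab; apply/in_shape_nat.
    by rewrite dyck_beyond //; lia.
  have := height_count_up D n.+1.
  by exists n; split=> //; move: Eb; case: ifP => ? //; lia.
case=> n [/andP [pn nD] -> ->]; have := height_count_up D n.+1.
split; last by apply: not_in_shape_above; lia.
have D1 : -1 <= height D n.+1.
  case: (ltnP n (size D)) => nD'; first by have := dyck_ge0 dD nD'; lia.
  by rewrite dyck_beyond //; lia.
apply/in_shape_nat; rewrite size_raise height_raise.
by rewrite (_ : (p < n.+1)%N = true); [split; lia | lia].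
Qed.

Lemma ribbon_raise : ribbon (fun c => in_shape (raise D p) c /\ ~ in_shape D c).
Proof.
set R := fun c => _.
pose col n : cell := (n%:Z, height D n.+1 + 1).
have Rcol n : (p <= n <= size D)%N -> R (col n).
  by move=> pnD; apply/raise_new_cellP; exists n.
split.
- by case=> a b [[b0 parity _ _ _] _].
- by exists (col (size D)); apply: Rcol; rewrite pD leqnn.
- case=> a b [a' b'] /raise_new_cellP [n [pnD -> ->]]
    /raise_new_cellP [m [pmD -> ->]].
  apply: (chain_connected Rcol _ pnD pmD) => k _.
  by split; rewrite /col /=; have := height_step D k.+1; lia.
- move=> a b [_ /raise_new_cellP [n [_ e1 e2]] /raise_new_cellP [m [_ e3 e4]] _].
  have nm : n = m by lia.
  by move: e2 e4; rewrite nm; lia.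
Qed.

Lemma cover_raise : dcover D (raise D p).
Proof.
by split; [| exact: dyck_raise | exact: size_raise | exact: raise_shape_sub
          | exact: ribbon_raise].
Qed.

End Raise.

Lemma dle_up_subset D E : dle D E -> up_subset D E.
Proof.
elim=> [x y /cover_up_subset //|x //|x y z _ xy _ yz i /xy /yz //].
Qed.

Lemma raise_prefix D E k : is_dyck D -> is_dyck E -> exists J,
  [/\ is_dyck J, dle D J &
      forall i, nth false J i = nth false D i || (i < k)%N && nth false E i].
Proof.
move=> dD dE; elim: k => [|k [J [dJ DJ Ji]]].
  by exists D; split=> [||i]; [| apply: rt_refl | rewrite orbF].
have Ji_lt i : (i < k)%N -> nth false J i = nth false D i || nth false E i.
  by move=> ik; rewrite Ji ik.
case Ek: (nth false E k); last first.
  exists J; split=> // i.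
  rewrite Ji [(i < k.+1)%N]ltnS [(i <= k)%N]leq_eqVlt.
  by case: eqVneq => [->|] //=; rewrite Ek ltnn andbF.
case Jk: (nth false J k).
  exists J; split=> // i.
  rewrite Ji [(i < k.+1)%N]ltnS [(i <= k)%N]leq_eqVlt.
  by case: eqVneq => [->|] //=; move: Jk; rewrite Ji ltnn orbF => ->.
have kJ : (k <= size J)%N.
  by apply: (up_before_size dJ dE Ek) => i ik Ei; rewrite Ji_lt // Ei orbT.
exists (raise J k); split.
- by apply: dyck_raise; rewrite ?Jk.
- by apply: rt_trans DJ _; apply: rt_step; apply: cover_raise; rewrite ?Jk.
- move=> i; rewrite nth_raise ?Jk // Ji.
  rewrite [(i < k.+1)%N]ltnS [(i <= k)%N]leq_eqVlt.
  by case: eqVneq => [->|] /=; rewrite ?Ek ?orbT ?orbF.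
Qed.

Lemma exists_up_union D E : is_dyck D -> is_dyck E -> exists J,
  [/\ is_dyck J, dle D J &
      forall i, nth false J i = nth false D i || nth false E i].
Proof.
move=> dD dE; have [J [dJ DJ Ji]] := raise_prefix (size E) dD dE.
exists J; split=> // i; rewrite Ji.
by case Ei: (nth false E i); rewrite ?andbF // (up_lt_size Ei).
Qed.

Lemma up_subset_dle D E : is_dyck D -> is_dyck E -> up_subset D E -> dle D E.
Proof.
move=> dD dE DE; have [J [dJ DJ Ji]] := exists_up_union dD dE.
suff -> : E = J by [].
apply: dyck_up_inj => // i; rewrite Ji.
by case Di: (nth false D i) => //; rewrite (DE i Di).
Qed.

Lemma greedy_prefix (C : pred nat) k : exists M,
  [/\ is_dyck M, forall i, nth false M i -> (i < k)%N && C i &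
      forall L, is_dyck L -> (forall i, nth false L i -> C i) ->
        forall i, (i < k)%N -> nth false L i -> nth false M i].
Proof.
elim: k => [|k [M [dM MC Mmax]]].
  exists [::]; split=> [||L _ _ i] //; first exact: dyck_nil.
  by move=> i; rewrite nth_nil.
have Mk : ~~ nth false M k by apply/negP => /MC; rewrite ltnn.
case Ck: (C k && (k <= size M)%N).
  move/andP: Ck => [Ck kM]; exists (raise M k); split.
  - exact: dyck_raise.
  - move=> i; rewrite nth_raise // => /orP [/MC /andP [ik ->]|/eqP ->].
      by rewrite andbT ltnW.
    by rewrite Ck ltnSn.
  - move=> L dL LC i ik Li; rewrite nth_raise //.
    case: (ltngtP i k) => [ik'|ki|->]; last by rewrite orbT.
      by rewrite (Mmax L dL LC i).
    lia.
exists M; split=> //.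
- by move=> i /MC /andP [ik ->]; rewrite andbT ltnW.
- move=> L dL LC i; rewrite ltnS leq_eqVlt => /orP [/eqP -> Lk|].
    move: Ck; rewrite LC // (up_before_size dM dL Lk) // => j jk.
    exact: Mmax.
  exact: Mmax.
Qed.

Lemma exists_greatest_below (C : pred nat) n : (forall i, C i -> (i < n)%N) ->
  exists M, [/\ is_dyck M, forall i, nth false M i -> C i &
      forall L, is_dyck L -> (forall i, nth false L i -> C i) -> up_subset L M].
Proof.
move=> Cn; have [M [dM MC Mmax]] := greedy_prefix C n.
exists M; split=> // [i /MC /andP [] //|L dL LC i Li].
by apply: (Mmax L dL LC) => //; apply: Cn; apply: LC.
Qed.

Theorem mainTheorem5 :
  (forall D E : seq bool, is_dyck D -> is_dyck E -> dle D E -> dle E D -> D = E) /\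
  (forall D E : seq bool, is_dyck D -> is_dyck E ->
     (exists J, [/\ is_dyck J, dle D J, dle E J &
        forall U, is_dyck U -> dle D U -> dle E U -> dle J U]) /\
     (exists M, [/\ is_dyck M, dle M D, dle M E &
        forall L, is_dyck L -> dle L D -> dle L E -> dle L M])).
Proof.
split.
  move=> D E dD dE /dle_up_subset DE /dle_up_subset ED.
  by apply: dyck_up_inj => // i; apply/idP/idP => [/DE|/ED].
move=> D E dD dE; split.
  have [J [dJ DJ Ji]] := exists_up_union dD dE.
  exists J; split=> //.
    by apply: up_subset_dle => // i Ei; rewrite Ji Ei orbT.
  move=> U dU /dle_up_subset DU /dle_up_subset EU.
  by apply: up_subset_dle => // i; rewrite Ji => /orP [/DU|/EU].
have [M [dM MDE Mmax]] :=
  @exists_greatest_below (fun i => nth false D i && nth false E i) (size D)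
    (fun i DEi => up_lt_size (andP DEi).1).
exists M; split=> //.
- by apply: up_subset_dle => // i /MDE /andP [].
- by apply: up_subset_dle => // i /MDE /andP [].
- move=> L dL /dle_up_subset LD /dle_up_subset LE.
  by apply/up_subset_dle/Mmax => // i Li; rewrite LD ?LE.
Qed.
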